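(* Let $\alpha\in(0,1)$, $n\ge1$, and let $(x_{i1},x_{i2},y_i)\in\mathbb R^3$, $i=1,\dots,n$. Write $s_j(\theta)=\frac1n\sum_{i=1}^n\mathrm S^{\rm E}_{\alpha,\theta}(x_{ij},y_i)$ for $j=1,2$. Suppose that $s_1(\theta)\le s_2(\theta)$ for every $\theta\in\{x_{11},x_{12},y_1,\dots,x_{n1},x_{n2},y_n\}$, and that $\lim_{\theta\uparrow\theta_0}s_1(\theta)\le\lim_{\theta\uparrow\theta_0}s_2(\theta)$ for every $\theta_0\in\{x_{11},x_{12},\dots,x_{n1},x_{n2}\}$. Then $s_1(\theta)\le s_2(\theta)$ for every $\theta\in\mathbb R$, and consequently $\frac1n\sum_{i=1}^n\mathrm S(x_{i1},y_i)\le\frac1n\sum_{i=1}^n\mathrm S(x_{i2},y_i)$ for every $\mathrm S\in\mathcal S^{\rm E}_\alpha$ (i.e. $(x_{i1})_i$ dominates $(x_{i2})_i$ for $\alpha$-expectile prediction). In the case $\alpha=1/2$ the same conclusion holds if the condition at the points $\theta\in\{y_1,\dots,y_n\}$ is omitted.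
   Context: $(t)_+=\max(t,0)$. For convex $\phi:\mathbb R\to\mathbb R$, $\phi'$ is its left-hand derivative. $\mathcal S^{\rm E}_\alpha$ is the class of all scoring functions $\mathrm S(x,y)=|\mathbb 1(y<x)-\alpha|\,(\phi(y)-\phi(x)-\phi'(x)(y-x))$ with $\phi$ convex. The elementary expectile scoring function is $\mathrm S^{\rm E}_{\alpha,\theta}(x,y)=|\mathbb 1(y<x)-\alpha|\big((y-\theta)_+-(x-\theta)_+-(y-x)\mathbb 1(\theta<x)\big)$, i.e. it equals $(1-\alpha)|y-\theta|$ if $y\le\theta<x$, $\alpha|y-\theta|$ if $x\le\theta<y$, and $0$ otherwise. *)

From Stdlib Require Import Reals Lra.
Open Scope R_scope.

Fixpoint rsum (f : nat -> R) (n : nat) : R :=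
  match n with O => 0 | S k => rsum f k + f k end.


Definition ind_lt (y x : R) : R := if Rlt_dec y x then 1 else 0.

Definition pos_part (t : R) : R := Rmax t 0.

Definition SE (alpha theta x y : R) : R :=
  Rabs (ind_lt y x - alpha) *
  (pos_part (y - theta) - pos_part (x - theta) - (y - x) * ind_lt theta x).

Definition s_avg (alpha : R) (n : nat) (x y : nat -> R) (theta : R) : R :=
  / INR n * rsum (fun i => SE alpha theta (x i) (y i)) n.

Definition left_lim (f : R -> R) (x0 l : R) : Prop :=
  forall eps, 0 < eps -> exists delta, 0 < delta /\
    forall t, x0 - delta < t < x0 -> Rabs (f t - l) < eps.

Definition convex (phi : R -> R) : Prop :=
  forall a b t, 0 <= t <= 1 ->
    phi (t * a + (1 - t) * b) <= t * phi a + (1 - t) * phi b.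

Definition is_left_deriv (phi dphi : R -> R) : Prop :=
  forall x, left_lim (fun t => (phi t - phi x) / (t - x)) x (dphi x).

Definition S_phi (alpha : R) (phi dphi : R -> R) (x y : R) : R :=
  Rabs (ind_lt y x - alpha) * (phi y - phi x - dphi x * (y - x)).

Definition avg_score (alpha : R) (phi dphi : R -> R) (n : nat) (x y : nat -> R) : R :=
  / INR n * rsum (fun i => S_phi alpha phi dphi (x i) (y i)) n.

Definition dominates (alpha : R) (n : nat) (x1 x2 y : nat -> R) : Prop :=
  (forall theta, s_avg alpha n x1 y theta <= s_avg alpha n x2 y theta) /\
  (forall phi dphi, convex phi -> is_left_deriv phi dphi ->
     avg_score alpha phi dphi n x1 y <= avg_score alpha phi dphi n x2 y).

Definition left_lim_cond (alpha : R) (n : nat) (x1 x2 y : nat -> R) : Prop :=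
  forall theta0, (exists i, (i < n)%nat /\ (theta0 = x1 i \/ theta0 = x2 i)) ->
    forall l1 l2, left_lim (s_avg alpha n x1 y) theta0 l1 ->
                  left_lim (s_avg alpha n x2 y) theta0 l2 -> l1 <= l2.

(* Both score averages [s_j] are piecewise affine in theta, with breakpoints only at
   the data points, so [s_2 - s_1] is affine on each gap [a, b) between consecutive
   breakpoints; its values at a and (as a left limit) at b are nonnegative by
   hypothesis, hence so is every value in between, and outside all breakpoints both
   averages coincide.  For alpha = 1/2 the y-terms cancel in [s_2 - s_1], so only the
   forecasts are breakpoints of the difference.
   For a convex phi, the tangent lines at the sorted data points differ by hinges
   [c (t - theta)_+] with c >= 0, so on the data the score of phi is a nonnegative
   combination of elementary scores, and dominance transfers. *)

From Stdlib Require Import Reals Lra Lia List Sorted Permutation Classical.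
From Stdlib Require Orders Mergesort.
Import ListNotations.
Open Scope R_scope.

Lemma exists_max_in (f : R -> R) (P : R -> Prop) (L : list R) :
  (forall p, In p L -> ~ P p) \/
  exists a, In a L /\ P a /\ forall p, In p L -> P p -> f p <= f a.
Proof.
  induction L as [|q L IH]; [left; intros p []|].
  destruct (classic (P q)) as [Pq|Pq];
    destruct IH as [IH|[a [La [Pa Hmax]]]].
  - right; exists q; split; [left; auto|split; [auto|]].
    intros p [<-|Lp] Pp; [lra|contradiction (IH p Lp)].
  - right; destruct (Rle_dec (f a) (f q)) as [Haq|Haq].
    + exists q; split; [left; auto|split; [auto|]].
      intros p [<-|Lp] Pp; [lra|specialize (Hmax p Lp Pp); lra].
    + exists a; split; [right; auto|split; [auto|]].
      intros p [<-|Lp] Pp; [lra|auto].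
  - left; intros p [<-|Lp]; auto.
  - right; exists a; split; [right; auto|split; [auto|]].
    intros p [<-|Lp] Pp; [contradiction|auto].
Qed.

Lemma list_gap_left (L : list R) b :
  exists c, c < b /\ forall p, In p L -> ~ (c < p < b).
Proof.
  destruct (exists_max_in id (fun p => p < b) L) as [Hnone|[a [_ [Hab Hmax]]]].
  - exists (b - 1); split; [lra|]. intros p Lp Hp; apply (Hnone p Lp); lra.
  - exists a; split; [auto|]. intros p Lp Hp; specialize (Hmax p Lp); unfold id in Hmax; lra.
Qed.

Lemma list_gap_around (L : list R) theta :
  (forall p, In p L -> theta < p) \/ (forall p, In p L -> p <= theta) \/
  exists a b, In a L /\ In b L /\ a <= theta < b /\ forall p, In p L -> ~ (a < p < b).
Proof.
  destruct (exists_max_in id (fun p => p <= theta) L) as [Hbelow|[a [La [Ha Hmax]]]].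
  { left; intros p Lp; apply Rnot_le_lt, Hbelow, Lp. }
  destruct (exists_max_in Ropp (fun p => theta < p) L) as [Habove|[b [Lb [Hb Hmin]]]].
  { right; left; intros p Lp; apply Rnot_lt_le, Habove, Lp. }
  right; right; exists a, b; split; [auto|split; [auto|split; [lra|]]].
  intros p Lp Hp; unfold id in Hmax.
  destruct (Rle_dec p theta) as [Hpt|Hpt].
  - specialize (Hmax p Lp Hpt); lra.
  - assert (b <= p) by (specialize (Hmin p Lp ltac:(lra)); lra). lra.
Qed.

Module RLeBool <: Orders.TotalLeBool.
  Definition t := R.
  Definition leb (a b : R) : bool := if Rle_dec a b then true else false.
  Theorem leb_total : forall a b, leb a b = true \/ leb b a = true.
  Proof.
    intros a b; unfold leb; destruct (Rle_dec a b); [left; auto|].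
    destruct (Rle_dec b a); [right; auto|lra].
  Qed.
End RLeBool.

Module RSort := Mergesort.Sort RLeBool.

Lemma sorted_cover (L : list R) :
  exists l, StronglySorted Rle l /\ forall p, In p L -> In p l.
Proof.
  exists (RSort.sort L); split.
  - apply Sorted_StronglySorted; [intros a b c; apply Rle_trans|].
    induction (RSort.Sorted_sort L) as [|a l _ IH Hhd]; constructor; [auto|].
    destruct Hhd as [|b l Hab]; constructor.
    unfold RLeBool.leb in Hab; destruct (Rle_dec a b); [auto|discriminate].
  - intros p Lp; exact (Permutation_in p (RSort.Permuted_sort L) Lp).
Qed.

Definition forecast_points (n : nat) (x1 x2 : nat -> R) : list R :=
  flat_map (fun i => [x1 i; x2 i]) (seq 0 n).

Definition data_points (n : nat) (x1 x2 y : nat -> R) : list R :=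
  flat_map (fun i => [x1 i; x2 i; y i]) (seq 0 n).

Lemma in_forecast_points n x1 x2 p :
  In p (forecast_points n x1 x2) <->
  exists i, (i < n)%nat /\ (p = x1 i \/ p = x2 i).
Proof.
  unfold forecast_points; rewrite in_flat_map.
  split; intros [i [Hi Hp]]; exists i; rewrite in_seq in *; simpl in *;
    (split; [lia|intuition congruence]).
Qed.

Lemma in_data_points n x1 x2 y p :
  In p (data_points n x1 x2 y) <->
  exists i, (i < n)%nat /\ (p = x1 i \/ p = x2 i \/ p = y i).
Proof.
  unfold data_points; rewrite in_flat_map.
  split; intros [i [Hi Hp]]; exists i; rewrite in_seq in *; simpl in *;
    (split; [lia|intuition congruence]).
Qed.

(* [(c, theta) :: r] puts a point mass of weight [c] at [theta]. *)
Fixpoint wsum (r : list (R * R)) (g : R -> R) : R :=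
  match r with
  | [] => 0
  | (c, theta) :: r' => c * g theta + wsum r' g
  end.

Lemma wsum_scal r a g : wsum r (fun t => a * g t) = a * wsum r g.
Proof. induction r as [|[c t] r IH]; simpl; [ring|rewrite IH; ring]. Qed.

Lemma wsum_comb r a b f g h :
  wsum r (fun t => a * (f t - g t - b * h t)) = a * (wsum r f - wsum r g - b * wsum r h).
Proof. induction r as [|[c t] r IH]; simpl; [ring|rewrite IH; ring]. Qed.

Lemma wsum_eq0 r g : (forall c t, In (c, t) r -> g t = 0) -> wsum r g = 0.
Proof.
  induction r as [|[c t] r IH]; simpl; intros H; [auto|].
  rewrite (H c t (or_introl eq_refl)), IH; [ring|]. intros; eapply H; right; eauto.
Qed.

Lemma wsum_le r g h : (forall c t, In (c, t) r -> 0 <= c) -> (forall t, g t <= h t) ->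
  wsum r g <= wsum r h.
Proof.
  induction r as [|[c t] r IH]; simpl; intros Hc Hgh; [lra|].
  assert (c * g t <= c * h t) by (apply Rmult_le_compat_l; [eapply Hc; left|]; eauto).
  assert (wsum r g <= wsum r h) by (apply IH; [intros; eapply Hc; right|]; eauto).
  lra.
Qed.

Lemma rsum_wsum r (F : nat -> R -> R) n :
  rsum (fun i => wsum r (F i)) n = wsum r (fun t => rsum (fun i => F i t) n).
Proof.
  induction n as [|n IH]; simpl.
  - induction r as [|[c t] r IH]; simpl; [auto|rewrite <- IH; ring].
  - rewrite IH; clear IH; induction r as [|[c t] r IH]; simpl; [ring|rewrite <- IH; ring].
Qed.

Lemma rsum_minus f g n : rsum f n - rsum g n = rsum (fun i => f i - g i) n.
Proof. induction n; simpl; [ring|rewrite <- IHn; ring]. Qed.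

Lemma rsum_ext f g n : (forall i, (i < n)%nat -> f i = g i) -> rsum f n = rsum g n.
Proof. induction n; simpl; intros H; [auto|]. rewrite IHn, H; auto. Qed.

Lemma pos_part_id t : 0 <= t -> pos_part t = t.
Proof. intros; unfold pos_part; apply Rmax_left; auto. Qed.
Lemma pos_part_0 t : t <= 0 -> pos_part t = 0.
Proof. intros; unfold pos_part; apply Rmax_right; auto. Qed.
Lemma ind_lt_1 a b : a < b -> ind_lt a b = 1.
Proof. intros; unfold ind_lt; destruct Rlt_dec; lra. Qed.
Lemma ind_lt_0 a b : ~ a < b -> ind_lt a b = 0.
Proof. intros; unfold ind_lt; destruct Rlt_dec; lra. Qed.

Lemma hinge_active c theta p : 0 <= c -> (0 < c -> theta < p) ->
  c * pos_part (p - theta) = c * (p - theta) /\ c * ind_lt theta p = c.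
Proof.
  intros Hc Hact; destruct (Req_dec c 0) as [->|Hc0]; [split; ring|].
  specialize (Hact ltac:(lra)).
  rewrite pos_part_id, ind_lt_1 by lra; split; ring.
Qed.

(** * Convex functions and their left derivatives *)

Definition slope (f : R -> R) (a b : R) : R := (f b - f a) / (b - a).

Lemma slope_comm f a b : slope f a b = slope f b a.
Proof.
  unfold slope; destruct (Req_dec a b) as [->|Hab]; [reflexivity|].
  field; split; intro; apply Hab; lra.
Qed.

Lemma slope_mul f a b : a <> b -> slope f a b * (b - a) = f b - f a.
Proof. intros Hab; unfold slope; field; intro; apply Hab; lra. Qed.

Lemma convex_slope_increasing phi : convex phi ->
  forall a b c, a < b < c ->
  slope phi a b <= slope phi a c <= slope phi b c.
Proof.
  intros Hconv a b c [Hab Hbc].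
  set (t := (c - b) / (c - a)).
  assert (Et : t * (c - a) = c - b) by (unfold t; field; lra).
  assert (Ht : 0 <= t <= 1) by (split; nra).
  assert (Hchord := Hconv a c t Ht).
  replace (t * a + (1 - t) * c) with b in Hchord by (unfold t; field; lra).
  assert (Hchord' : (c - a) * phi b <= (c - b) * phi a + (b - a) * phi c).
  { replace ((c - b) * phi a + (b - a) * phi c)
      with ((c - a) * (t * phi a + (1 - t) * phi c)) by (unfold t; field; lra).
    apply Rmult_le_compat_l; lra. }
  assert (Eab := slope_mul phi a b ltac:(lra)).
  assert (Eac := slope_mul phi a c ltac:(lra)).
  assert (Ebc := slope_mul phi b c ltac:(lra)).
  split; nra.
Qed.

Lemma left_lim_const c x : left_lim (fun _ => c) x c.
Proof.
  intros eps Heps; exists 1; split; [lra|]; intros t _.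
  replace (c - c) with 0 by ring; rewrite Rabs_R0; lra.
Qed.

Lemma left_lim_le f g x l m :
  left_lim f x l -> left_lim g x m ->
  (exists delta, 0 < delta /\ forall t, x - delta < t < x -> f t <= g t) ->
  l <= m.
Proof.
  intros Hf Hg [d [Hd Hfg]].
  apply Rnot_lt_le; intro Hml.
  destruct (Hf ((l - m) / 2) ltac:(lra)) as [d1 [Hd1 H1]].
  destruct (Hg ((l - m) / 2) ltac:(lra)) as [d2 [Hd2 H2]].
  set (e := Rmin d (Rmin d1 d2)).
  assert (Hd_e := Rmin_l d (Rmin d1 d2)). assert (He12 := Rmin_r d (Rmin d1 d2)).
  assert (Hd1_e := Rmin_l d1 d2). assert (Hd2_e := Rmin_r d1 d2). fold e in Hd_e, He12.
  assert (He : 0 < e) by (apply Rmin_glb_lt; [|apply Rmin_glb_lt]; lra).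
  specialize (Hfg (x - e / 2) ltac:(lra)).
  specialize (H1 (x - e / 2) ltac:(lra)). specialize (H2 (x - e / 2) ltac:(lra)).
  apply Rabs_def2 in H1. apply Rabs_def2 in H2.
  lra.
Qed.

Section ConvexLeftDerivative.

Variables phi dphi : R -> R.
Hypothesis phi_convex : convex phi.
Hypothesis dphi_left : is_left_deriv phi dphi.

Lemma slope_le_dphi t x : t < x -> slope phi t x <= dphi x.
Proof.
  intros Htx.
  apply (left_lim_le (fun _ => slope phi t x) (slope phi x) x);
    [apply left_lim_const | exact (dphi_left x) |].
  exists (x - t); split; [lra|]; intros s Hs.
  rewrite (slope_comm phi x s).
  apply (convex_slope_increasing phi phi_convex t s x); lra.
Qed.

Lemma dphi_le_slope x t : x < t -> dphi x <= slope phi x t.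
Proof.
  intros Hxt.
  apply (left_lim_le (slope phi x) (fun _ => slope phi x t) x);
    [exact (dphi_left x) | apply left_lim_const |].
  exists 1; split; [lra|]; intros s Hs.
  rewrite (slope_comm phi x s).
  destruct (convex_slope_increasing phi phi_convex s x t ltac:(lra)); lra.
Qed.

Lemma dphi_mono p q : p <= q -> dphi p <= dphi q.
Proof.
  intros [Hpq|<-]; [|lra].
  apply Rle_trans with (slope phi p q); [apply dphi_le_slope | apply slope_le_dphi]; auto.
Qed.

Lemma tangent_le p t : phi p + dphi p * (t - p) <= phi t.
Proof.
  destruct (Rtotal_order t p) as [Htp|[->|Hpt]]; [| lra |].
  - assert (Hs := slope_le_dphi t p Htp).
    assert (E := slope_mul phi t p ltac:(lra)).
    assert (0 <= (dphi p - slope phi t p) * (p - t)) by (apply Rmult_le_pos; lra).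
    nra.
  - assert (Hs := dphi_le_slope p t Hpt).
    assert (E := slope_mul phi p t ltac:(lra)).
    assert (0 <= (slope phi p t - dphi p) * (t - p)) by (apply Rmult_le_pos; lra).
    nra.
Qed.

(* If phi met its tangent at p again at q, it would be affine on [p, q] and the
   left derivative could not increase up to q. *)
Lemma tangent_lt p q : p < q -> dphi p < dphi q -> phi p + dphi p * (q - p) < phi q.
Proof.
  intros Hpq Hd.
  destruct (tangent_le p q) as [|Eq]; [auto|exfalso].
  assert (Hdq : dphi q <= dphi p).
  { apply (left_lim_le (slope phi q) (fun _ => dphi p) q);
      [exact (dphi_left q) | apply left_lim_const |].
    exists (q - p); split; [lra|]; intros s Hs.
    assert (Hps := dphi_le_slope p s ltac:(lra)).
    assert (Hsq := proj1 (convex_slope_increasing phi phi_convex p s q ltac:(lra))).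
    assert (Epq := slope_mul phi p q ltac:(lra)).
    assert (Eps := slope_mul phi p s ltac:(lra)).
    assert (Slope_pq : slope phi p q = dphi p)
      by (apply Rmult_eq_reg_r with (q - p); lra).
    assert (Slope_ps : slope phi p s = dphi p) by lra.
    assert (Es : phi s = phi p + dphi p * (s - p)) by (rewrite Slope_ps in Eps; lra).
    right; unfold slope; rewrite Es, <- Eq; field; lra. }
  lra.
Qed.

(* [theta] is where the tangents at p and q cross. *)
Lemma tangent_kink p q : p <= q ->
  exists theta, p <= theta /\ (dphi p < dphi q -> theta < q) /\
  forall t, phi q + dphi q * (t - q) =
            phi p + dphi p * (t - p) + (dphi q - dphi p) * (t - theta).
Proof.
  intros Hpq.
  assert (Tpq := tangent_le p q). assert (Tqp := tangent_le q p).
  destruct (Rlt_dec (dphi p) (dphi q)) as [Hd|Hd].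
  - set (gap := phi q - phi p - dphi p * (q - p)).
    assert (Hlt : p < q) by (destruct Hpq as [|<-]; [auto|lra]).
    assert (Hgap : 0 < gap) by (unfold gap; assert (H := tangent_lt p q Hlt Hd); lra).
    assert (Hgap_le : gap <= (dphi q - dphi p) * (q - p)) by (unfold gap; lra).
    exists (q - gap / (dphi q - dphi p)); split; [|split].
    + cut (gap / (dphi q - dphi p) <= q - p); [lra|].
      apply Rmult_le_reg_r with (dphi q - dphi p); [lra|].
      unfold Rdiv; rewrite Rmult_assoc, Rinv_l; lra.
    + intros _; cut (0 < gap / (dphi q - dphi p)); [lra|].
      apply Rdiv_lt_0_compat; lra.
    + intros t; unfold gap; field; lra.
  - assert (Eq : dphi p = dphi q) by (assert (H := dphi_mono p q Hpq); lra).
    exists q; split; [auto|split; [lra|]].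
    intros t; rewrite <- Eq in *; nra.
Qed.

(* The hinges sit where the tangents at consecutive points cross. *)
Lemma tangent_mixture q l : StronglySorted Rle (q :: l) ->
  exists r, (forall c theta, In (c, theta) r -> 0 <= c /\ q <= theta) /\
  forall p, In p (q :: l) ->
    phi p = phi q + dphi q * (p - q) + wsum r (fun theta => pos_part (p - theta)) /\
    dphi p = dphi q + wsum r (fun theta => ind_lt theta p).
Proof.
  revert q; induction l as [|q' l IH]; intros q Hsort.
  - exists []; split; [intros c t []|].
    intros p [<-|[]]; simpl; split; ring.
  - apply StronglySorted_inv in Hsort as [Hsort Hq].
    assert (Hqq' : q <= q') by (inversion Hq; auto).
    destruct (IH q' Hsort) as [r [Hr Hrep]].
    destruct (tangent_kink q q' Hqq') as [theta [Hth [Hth' Htan]]].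
    assert (Hc : 0 <= dphi q' - dphi q) by (assert (H := dphi_mono q q' Hqq'); lra).
    exists ((dphi q' - dphi q, theta) :: r); split.
    + intros c t [E|Ht]; [injection E as <- <-; auto|].
      destruct (Hr c t Ht); split; lra.
    + intros p [<-|Hp]; simpl.
      * rewrite !wsum_eq0 by (intros c t Ht; destruct (Hr c t Ht);
          first [rewrite pos_part_0 | rewrite ind_lt_0]; lra).
        rewrite pos_part_0, ind_lt_0 by lra; split; ring.
      * assert (Hq'p : q' <= p).
        { destruct Hp as [<-|Hp]; [lra|].
          apply StronglySorted_inv in Hsort as [_ Hl].
          rewrite Forall_forall in Hl; auto. }
        assert (Hactive : 0 < dphi q' - dphi q -> theta < p)
          by (intros Hpos; assert (H := Hth' ltac:(lra)); lra).
        destruct (hinge_active _ theta p Hc Hactive) as [Hpos Hind].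
        destruct (Hrep p Hp) as [Ep Dp].
        rewrite Ep, Dp, Htan, Hpos, Hind; split; ring.
Qed.

Lemma score_mixture l : StronglySorted Rle l ->
  exists r, (forall c theta, In (c, theta) r -> 0 <= c) /\
  forall alpha x y, In x l -> In y l ->
    S_phi alpha phi dphi x y = wsum r (fun theta => SE alpha theta x y).
Proof.
  destruct l as [|q l]; intros Hsort.
  - exists []; split; [intros c t []|intros alpha x y []].
  - destruct (tangent_mixture q l Hsort) as [r [Hr Hrep]].
    exists r; split; [intros c t Ht; apply (Hr c t Ht)|].
    intros alpha x y Hx Hy; unfold S_phi, SE.
    rewrite (wsum_comb r _ _ (fun t => pos_part (y - t)) (fun t => pos_part (x - t))
                       (fun t => ind_lt t x)).
    destruct (Hrep x Hx) as [Ex Dx]; destruct (Hrep y Hy) as [Ey _].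
    rewrite Ey, Ex, Dx; ring.
Qed.

End ConvexLeftDerivative.

Lemma avg_score_mixture alpha phi dphi n x y r :
  (forall i, (i < n)%nat ->
     S_phi alpha phi dphi (x i) (y i) = wsum r (fun theta => SE alpha theta (x i) (y i))) ->
  avg_score alpha phi dphi n x y = wsum r (s_avg alpha n x y).
Proof.
  intros Hmix; unfold avg_score, s_avg.
  rewrite wsum_scal, <- rsum_wsum; f_equal; apply rsum_ext; exact Hmix.
Qed.

Lemma dominates_of_elementary alpha n x1 x2 y :
  (forall theta, s_avg alpha n x1 y theta <= s_avg alpha n x2 y theta) ->
  dominates alpha n x1 x2 y.
Proof.
  intros Hel; split; [exact Hel|]; intros phi dphi Hconv Hder.
  destruct (sorted_cover (data_points n x1 x2 y)) as [l [Hsort Hcover]].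
  destruct (score_mixture phi dphi Hconv Hder l Hsort) as [r [Hr Hmix]].
  rewrite (avg_score_mixture alpha phi dphi n x1 y r),
          (avg_score_mixture alpha phi dphi n x2 y r).
  - apply wsum_le; auto.
  - intros i Hi; apply Hmix; apply Hcover, in_data_points; exists i; auto.
  - intros i Hi; apply Hmix; apply Hcover, in_data_points; exists i; auto.
Qed.

(** * Piecewise affine structure of the elementary score averages *)

Definition affine (f : R -> R) : Prop := exists m c, forall t, f t = m * t + c.

Lemma affine_minus f g : affine f -> affine g -> affine (fun t => f t - g t).
Proof.
  intros [m [c Hf]] [m' [c' Hg]]; exists (m - m'), (c - c'); intros t.
  rewrite Hf, Hg; ring.
Qed.

Lemma affine_scal a f : affine f -> affine (fun t => a * f t).
Proof. intros [m [c Hf]]; exists (a * m), (a * c); intros t; rewrite Hf; ring. Qed.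

Lemma affine_rsum (F : nat -> R -> R) n :
  (forall i, affine (F i)) -> affine (fun t => rsum (fun i => F i t) n).
Proof.
  intros HF; induction n as [|n [m [c IH]]]; simpl; [exists 0, 0; intros; ring|].
  destruct (HF n) as [m' [c' Hn]]; exists (m + m'), (c + c'); intros t.
  rewrite IH, Hn; ring.
Qed.

Lemma affine_nonneg_between g a b t : affine g -> a < b -> a <= t <= b ->
  0 <= g a -> 0 <= g b -> 0 <= g t.
Proof.
  intros [m [c Hg]] Hab Ht Ha Hb; rewrite Hg in *.
  assert (E : (b - a) * (m * t + c) = (b - t) * (m * a + c) + (t - a) * (m * b + c)) by ring.
  assert (0 <= (b - t) * (m * a + c)) by (apply Rmult_le_pos; lra).
  assert (0 <= (t - a) * (m * b + c)) by (apply Rmult_le_pos; lra).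
  nra.
Qed.

Lemma left_lim_affine f g b : affine g ->
  (exists c, c < b /\ forall t, c < t < b -> f t = g t) -> left_lim f b (g b).
Proof.
  intros [m [k Hg]] [c [Hcb Hfg]] eps Heps.
  assert (Hm := Rabs_pos m).
  set (d := eps / (Rabs m + 1)).
  assert (Ed : (Rabs m + 1) * d = eps) by (unfold d; field; lra).
  assert (Hd : 0 < d) by (apply Rdiv_lt_0_compat; lra).
  assert (H1 := Rmin_l (b - c) d). assert (H2 := Rmin_r (b - c) d).
  exists (Rmin (b - c) d); split; [apply Rmin_glb_lt; lra|]; intros t Ht.
  rewrite Hfg, !Hg by lra.
  replace (m * t + k - (m * b + k)) with (m * (t - b)) by ring.
  rewrite Rabs_mult, (Rabs_left (t - b)) by lra.
  nra.
Qed.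

(* [g b b] stands for the left limit of [D] at the breakpoint [b]. *)
Lemma nonneg_of_breakpoints (D : R -> R) (g : R -> R -> R) (P : list R) :
  (forall t, (forall p, In p P -> t < p) \/ (forall p, In p P -> p <= t) -> D t = 0) ->
  (forall b, affine (g b)) ->
  (forall b t, t < b -> (forall p, In p P -> ~ (t < p < b)) -> D t = g b t) ->
  (forall p, In p P -> 0 <= D p) ->
  (forall b, In b P -> 0 <= g b b) ->
  forall t, 0 <= D t.
Proof.
  intros Hout Haff Hgap Hpt Hend t.
  destruct (list_gap_around P t) as [Hlo|[Hhi|[a [b [Ha [Hb [Hab HP]]]]]]];
    [rewrite Hout by auto; lra | rewrite Hout by auto; lra |].
  assert (Hgap_a : D a = g b a)
    by (apply Hgap; [lra|]; intros p Hp Hin; apply (HP p Hp); lra).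
  rewrite (Hgap b t) by (try lra; intros p Hp Hin; apply (HP p Hp); lra).
  apply (affine_nonneg_between (g b) a b t (Haff b)); [lra | lra | | auto].
  rewrite <- Hgap_a; auto.
Qed.

(* The affine branch of [theta |-> SE alpha theta x y] just left of [b]: the hinges
   and the indicator are frozen at their values for theta slightly below [b]. *)
Definition SE_branch (alpha b theta x y : R) : R :=
  Rabs (ind_lt y x - alpha) *
  ((if Rle_dec b y then y - theta else 0) - (if Rle_dec b x then x - theta else 0)
   - (y - x) * (if Rle_dec b x then 1 else 0)).

Definition s_branch (alpha : R) (n : nat) (x y : nat -> R) (b theta : R) : R :=
  / INR n * rsum (fun i => SE_branch alpha b theta (x i) (y i)) n.

Lemma SE_branch_affine alpha b x y : affine (fun theta => SE_branch alpha b theta x y).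
Proof.
  unfold SE_branch; apply affine_scal.
  destruct (Rle_dec b y), (Rle_dec b x);
    [exists 0, 0 | exists (-1), y | exists 1, (- y) | exists 0, 0]; intros t; ring.
Qed.

Lemma s_branch_affine alpha n x y b : affine (s_branch alpha n x y b).
Proof.
  apply affine_scal, (affine_rsum (fun i t => SE_branch alpha b t (x i) (y i))).
  intros i; apply SE_branch_affine.
Qed.

Lemma hinge_branch_forecast theta b x : (theta < x <-> b <= x) ->
  pos_part (x - theta) = (if Rle_dec b x then x - theta else 0) /\
  ind_lt theta x = (if Rle_dec b x then 1 else 0).
Proof.
  intros Hx; destruct (Rle_dec b x) as [Hbx|Hbx].
  - assert (theta < x) by (apply Hx; auto).
    rewrite pos_part_id, ind_lt_1 by lra; auto.
  - assert (~ theta < x) by (rewrite Hx; auto).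
    rewrite pos_part_0, ind_lt_0 by lra; auto.
Qed.

Lemma hinge_branch_obs theta b y : theta <= b -> (theta < y -> b <= y) ->
  pos_part (y - theta) = (if Rle_dec b y then y - theta else 0).
Proof.
  intros Htb Hy; destruct (Rle_dec b y) as [Hby|Hby].
  - apply pos_part_id; lra.
  - apply pos_part_0; destruct (Rlt_dec theta y) as [H|H]; [contradiction (Hby (Hy H))|lra].
Qed.

Lemma SE_eq_branch alpha b theta x y : theta <= b ->
  (theta < x <-> b <= x) -> (theta < y -> b <= y) ->
  SE alpha theta x y = SE_branch alpha b theta x y.
Proof.
  intros Htb Hx Hy; unfold SE, SE_branch.
  destruct (hinge_branch_forecast theta b x Hx) as [-> ->].
  rewrite (hinge_branch_obs theta b y Htb Hy); reflexivity.
Qed.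

Lemma Rabs_ind_lt_half y x : Rabs (ind_lt y x - 1 / 2) = 1 / 2.
Proof.
  unfold ind_lt; destruct Rlt_dec; [rewrite Rabs_right | rewrite Rabs_left]; lra.
Qed.

(* For alpha = 1/2 both forecasts carry the same weight, so the y-hinges cancel. *)
Lemma SE_half_diff_eq_branch b theta x1 x2 y :
  (theta < x1 <-> b <= x1) -> (theta < x2 <-> b <= x2) ->
  SE (1 / 2) theta x2 y - SE (1 / 2) theta x1 y =
  SE_branch (1 / 2) b theta x2 y - SE_branch (1 / 2) b theta x1 y.
Proof.
  intros Hx1 Hx2; unfold SE, SE_branch; rewrite !Rabs_ind_lt_half.
  destruct (hinge_branch_forecast theta b x1 Hx1) as [-> ->].
  destruct (hinge_branch_forecast theta b x2 Hx2) as [-> ->].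
  ring.
Qed.

Lemma SE_half_indep theta x1 x2 y : (theta < x1 <-> theta < x2) ->
  SE (1 / 2) theta x1 y = SE (1 / 2) theta x2 y.
Proof.
  intros H; unfold SE; rewrite !Rabs_ind_lt_half.
  destruct (Rlt_dec theta x1) as [H1|H1].
  - assert (theta < x2) by (apply H; auto).
    rewrite (pos_part_id (x1 - theta)), (pos_part_id (x2 - theta)), !ind_lt_1 by lra; ring.
  - assert (~ theta < x2) by (rewrite <- H; auto).
    rewrite (pos_part_0 (x1 - theta)), (pos_part_0 (x2 - theta)), !ind_lt_0 by lra; ring.
Qed.

Lemma SE_outside alpha theta x y :
  (theta < x /\ theta < y) \/ (x <= theta /\ y <= theta) -> SE alpha theta x y = 0.
Proof.
  intros [[Hx Hy]|[Hx Hy]]; unfold SE.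
  - rewrite (pos_part_id (x - theta)), (pos_part_id (y - theta)), (ind_lt_1 theta x)
      by lra; ring.
  - rewrite (pos_part_0 (x - theta)), (pos_part_0 (y - theta)), (ind_lt_0 theta x)
      by lra; ring.
Qed.

Lemma s_avg_eq_branch alpha n x y b theta : theta < b ->
  (forall i, (i < n)%nat -> ~ (theta < x i < b) /\ ~ (theta < y i < b)) ->
  s_avg alpha n x y theta = s_branch alpha n x y b theta.
Proof.
  intros Htb Hgap; unfold s_avg, s_branch; f_equal; apply rsum_ext; intros i Hi.
  destruct (Hgap i Hi); apply SE_eq_branch; [lra | split; intro; lra | intro; lra].
Qed.

Lemma s_avg_at_branch alpha n x y b : (forall i, (i < n)%nat -> x i <> b) ->
  s_avg alpha n x y b = s_branch alpha n x y b b.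
Proof.
  intros Hx; unfold s_avg, s_branch; f_equal; apply rsum_ext; intros i Hi.
  apply SE_eq_branch; [lra | split | intro; lra]; intros H; [lra|].
  destruct H as [H|H]; [auto|contradiction (Hx i Hi); auto].
Qed.

Lemma s_avg_left_lim alpha n x y b :
  left_lim (s_avg alpha n x y) b (s_branch alpha n x y b b).
Proof.
  destruct (list_gap_left (data_points n x x y) b) as [c [Hcb Hgap]].
  assert (Hin : forall i, (i < n)%nat ->
                  In (x i) (data_points n x x y) /\ In (y i) (data_points n x x y))
    by (intros i Hi; rewrite !in_data_points; split; exists i; auto).
  apply left_lim_affine; [apply s_branch_affine|].
  exists c; split; [auto|]; intros t Ht.
  apply s_avg_eq_branch; [lra|]; intros i Hi; destruct (Hin i Hi) as [Hx Hy].
  split; intros H; [apply (Hgap _ Hx) | apply (Hgap _ Hy)]; lra.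
Qed.

Lemma s_branch_le_at_forecast alpha n x1 x2 y b :
  left_lim_cond alpha n x1 x2 y ->
  (exists i, (i < n)%nat /\ (b = x1 i \/ b = x2 i)) ->
  s_branch alpha n x1 y b b <= s_branch alpha n x2 y b b.
Proof. intros Hlim Hb; apply (Hlim b Hb); apply s_avg_left_lim. Qed.

Lemma s_avg_outside alpha n x y theta :
  (forall i, (i < n)%nat ->
     (theta < x i /\ theta < y i) \/ (x i <= theta /\ y i <= theta)) ->
  s_avg alpha n x y theta = 0.
Proof.
  intros Hout; unfold s_avg.
  rewrite (rsum_ext _ (fun _ => 0)) by (intros i Hi; apply SE_outside, Hout, Hi).
  replace (rsum (fun _ => 0) n) with 0 by (clear Hout; induction n; simpl; lra); ring.
Qed.

Lemma s_avg_half_eq n x1 x2 y theta :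
  (forall i, (i < n)%nat -> (theta < x1 i <-> theta < x2 i)) ->
  s_avg (1 / 2) n x1 y theta = s_avg (1 / 2) n x2 y theta.
Proof.
  intros H; unfold s_avg; f_equal; apply rsum_ext; intros i Hi.
  apply SE_half_indep, H, Hi.
Qed.

Lemma s_avg_half_diff_eq_branch n x1 x2 y b theta : theta < b ->
  (forall i, (i < n)%nat -> ~ (theta < x1 i < b) /\ ~ (theta < x2 i < b)) ->
  s_avg (1 / 2) n x2 y theta - s_avg (1 / 2) n x1 y theta =
  s_branch (1 / 2) n x2 y b theta - s_branch (1 / 2) n x1 y b theta.
Proof.
  intros Htb Hgap; unfold s_avg, s_branch; rewrite <- !Rmult_minus_distr_l; f_equal.
  rewrite !rsum_minus; apply rsum_ext; intros i Hi.
  destruct (Hgap i Hi); apply SE_half_diff_eq_branch; split; intro; lra.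
Qed.

Lemma elementary_dominance alpha n x1 x2 y :
  (forall theta, (exists i, (i < n)%nat /\
      (theta = x1 i \/ theta = x2 i \/ theta = y i)) ->
     s_avg alpha n x1 y theta <= s_avg alpha n x2 y theta) ->
  left_lim_cond alpha n x1 x2 y ->
  forall theta, s_avg alpha n x1 y theta <= s_avg alpha n x2 y theta.
Proof.
  intros Hpts Hlim theta.
  set (P := data_points n x1 x2 y).
  assert (HP : forall i, (i < n)%nat -> In (x1 i) P /\ In (x2 i) P /\ In (y i) P)
    by (intros i Hi; unfold P; rewrite !in_data_points; repeat split; exists i; auto).
  enough (0 <= s_avg alpha n x2 y theta - s_avg alpha n x1 y theta) by lra.
  apply (nonneg_of_breakpoints
           (fun t => s_avg alpha n x2 y t - s_avg alpha n x1 y t)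
           (fun b t => s_branch alpha n x2 y b t - s_branch alpha n x1 y b t) P).
  - intros t Hout; rewrite !s_avg_outside; [ring | |]; intros i Hi;
      destruct (HP i Hi) as (? & ? & ?);
      (destruct Hout as [Hlo|Hhi]; [left | right]; split; auto).
  - intros b; apply affine_minus; apply s_branch_affine.
  - intros b t Htb Hgap.
    rewrite !(s_avg_eq_branch alpha n _ y b t Htb); [reflexivity | |];
      intros i Hi; destruct (HP i Hi) as (? & ? & ?); split; apply Hgap; auto.
  - intros p Hp; unfold P in Hp; rewrite in_data_points in Hp.
    assert (H := Hpts p Hp); lra.
  - intros b Hb.
    destruct (classic (exists i, (i < n)%nat /\ (b = x1 i \/ b = x2 i))) as [Hx|Hx].
    + assert (H := s_branch_le_at_forecast alpha n x1 x2 y b Hlim Hx); lra.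
    + rewrite <- !s_avg_at_branch
        by (intros i Hi E; apply Hx; exists i; split; [auto|]; rewrite E; auto).
      unfold P in Hb; rewrite in_data_points in Hb.
      assert (H := Hpts b Hb); lra.
Qed.

Lemma elementary_dominance_half n x1 x2 y :
  (forall theta, (exists i, (i < n)%nat /\ (theta = x1 i \/ theta = x2 i)) ->
     s_avg (1 / 2) n x1 y theta <= s_avg (1 / 2) n x2 y theta) ->
  left_lim_cond (1 / 2) n x1 x2 y ->
  forall theta, s_avg (1 / 2) n x1 y theta <= s_avg (1 / 2) n x2 y theta.
Proof.
  intros Hpts Hlim theta.
  set (P := forecast_points n x1 x2).
  assert (HP : forall i, (i < n)%nat -> In (x1 i) P /\ In (x2 i) P)
    by (intros i Hi; unfold P; rewrite !in_forecast_points; split; exists i; auto).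
  enough (0 <= s_avg (1 / 2) n x2 y theta - s_avg (1 / 2) n x1 y theta) by lra.
  apply (nonneg_of_breakpoints
           (fun t => s_avg (1 / 2) n x2 y t - s_avg (1 / 2) n x1 y t)
           (fun b t => s_branch (1 / 2) n x2 y b t - s_branch (1 / 2) n x1 y b t) P).
  - intros t Hout; rewrite (s_avg_half_eq n x1 x2 y t); [ring|]; intros i Hi.
    destruct (HP i Hi) as [Hx1 Hx2]; destruct Hout as [Hlo|Hhi].
    + split; intros; [apply Hlo | apply Hlo]; auto.
    + assert (Hhi1 := Hhi _ Hx1); assert (Hhi2 := Hhi _ Hx2); split; intros; lra.
  - intros b; apply affine_minus; apply s_branch_affine.
  - intros b t Htb Hgap; apply s_avg_half_diff_eq_branch; [auto|].
    intros i Hi; destruct (HP i Hi); split; apply Hgap; auto.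
  - intros p Hp; unfold P in Hp; rewrite in_forecast_points in Hp.
    assert (H := Hpts p Hp); lra.
  - intros b Hb; unfold P in Hb; rewrite in_forecast_points in Hb.
    assert (H := s_branch_le_at_forecast (1 / 2) n x1 x2 y b Hlim Hb); lra.
Qed.

Theorem mainTheorem9 (alpha : R) (n : nat) (x1 x2 y : nat -> R) :
  0 < alpha < 1 -> (1 <= n)%nat ->
  ( ( (forall theta, (exists i, (i < n)%nat /\
          (theta = x1 i \/ theta = x2 i \/ theta = y i)) ->
        s_avg alpha n x1 y theta <= s_avg alpha n x2 y theta) ->
      left_lim_cond alpha n x1 x2 y ->
      dominates alpha n x1 x2 y )
  /\
    ( alpha = 1 / 2 ->
      (forall theta, (exists i, (i < n)%nat /\ (theta = x1 i \/ theta = x2 i)) ->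
        s_avg alpha n x1 y theta <= s_avg alpha n x2 y theta) ->
      left_lim_cond alpha n x1 x2 y ->
      dominates alpha n x1 x2 y ) ).
Proof.
  intros _ _; split.
  - intros Hpts Hlim.
    apply dominates_of_elementary, elementary_dominance; auto.
  - intros -> Hpts Hlim.
    apply dominates_of_elementary, elementary_dominance_half; auto.
Qed.
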